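(* Let $\Sigma_1\subset(N_1)_{\mathbf R}$ and $\Sigma_2\subset(N_2)_{\mathbf R}$ be amply equivalent complete fans (via $\Psi$) with $\Sigma_1$ smooth, and let $\Phi:(N_1)_{\mathbf Q}\to(N_2)_{\mathbf Q}$ be the $\mathbf Q$-linear isomorphism with $\Phi(u_\rho)=u_{\Psi(\rho)}$ for all $\rho\in\Sigma_1(1)$. Then the restriction of $\Phi$ to $N_1$ factors through $N_2$ as an injective $\mathbf Z$-linear map $N_1\hookrightarrow N_2$. Moreover $\Sigma_2$ is simplicial, and the following are equivalent: (1) some maximal cone of $\Sigma_2$ is smooth; (2) the restriction of $\Phi$ to $N_1$ factors as a $\mathbf Z$-isomorphism $N_1\cong N_2$; (3) $\Sigma_2$ is smooth. In this case, the isomorphism $N_1\cong N_2$ induces a toric isomorphism $X_{\Sigma_1}\cong X_{\Sigma_2}$.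
   Context: For a fan: rays $\Sigma(1)$, primitive generators $u_\rho$; a primitive collection is $C\subset\Sigma(1)$ not contained in $\sigma(1)$ for any cone $\sigma$ while every proper subset is. Complete fans $\Sigma_1,\Sigma_2$ in lattices of equal rank are amply equivalent via a bijection $\Psi:\Sigma_1(1)\to\Sigma_2(1)$ if $\Psi$ maps primitive collections exactly onto primitive collections and, for all integers $(a_\rho)$, $\sum a_\rho u_\rho=0\iff\sum a_\rho u_{\Psi(\rho)}=0$; in that case a $\mathbf Q$-linear isomorphism $\Phi$ with $\Phi(u_\rho)=u_{\Psi(\rho)}$ exists, and its $\mathbf R$-extension maps cones of $\Sigma_1$ bijectively onto cones of $\Sigma_2$. A cone is smooth if its primitive ray generators form part of a $\mathbf Z$-basis of the lattice; a fan is smooth (resp. simplicial) if all its cones are smooth (resp. have linearly independent ray generators). *)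

(* fans encoded combinatorially (rays indexed by a finType,
   cones by their sets of rays), geometry over an arbitrary R : realType. *)
From HB Require Import structures.
From mathcomp Require Import all_boot all_order all_algebra.
From mathcomp Require Import reals.
Set Implicit Arguments. Unset Strict Implicit. Unset Printing Implicit Defensive.
Import Order.TTheory GRing.Theory Num.Theory.
Local Open Scope ring_scope.

Section Fans.
Variable R : realType.
Variable n : nat.

(* the lattice N = Z^n, as integer row vectors; N_R = R^n *)
Definition toR (v : 'rV[int]_n) : 'rV[R]_n := map_mx (fun z : int => z%:~R) v.

Definition dotR (m x : 'rV[R]_n) : R := \sum_(j < n) m ord0 j * x ord0 j.

Definition primitive_vec (v : 'rV[int]_n) : Prop :=
  v != 0 /\ forall (k : int) (w : 'rV[int]_n), v = k *: w -> `|k| = 1.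

Variable I : finType.
Variable u : I -> 'rV[int]_n.

Definition cone_of (S : {set I}) (x : 'rV[R]_n) : Prop :=
  exists a : I -> R, (forall i, 0 <= a i) /\ x = \sum_(i in S) a i *: toR (u i).

Definition strongly_convex (sigma : 'rV[R]_n -> Prop) : Prop :=
  forall x, sigma x -> sigma (- x) -> x = 0.

Definition is_face (sigma tau : 'rV[R]_n -> Prop) : Prop :=
  exists m : 'rV[R]_n, (forall x, sigma x -> 0 <= dotR m x) /\
    (forall x, tau x <-> (sigma x /\ dotR m x = 0)).

(* (I, u, C) is a fan in R^n whose set of rays is I (with primitive
   generators u) and whose cones are the cone_of S, S \in C, where S is
   exactly the set of rays of that cone. *)
Definition is_fan (C : {set {set I}}) : Prop :=
  (forall i, primitive_vec (u i)) /\
  [/\ (forall i, [set i] \in C),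
      (forall S, S \in C -> strongly_convex (cone_of S)),
      (forall S, S \in C -> forall i, (i \in S <-> is_face (cone_of S) (cone_of [set i]))),
      (forall S, S \in C -> forall tau, is_face (cone_of S) tau ->
          exists2 T, T \in C & forall x, cone_of T x <-> tau x) &
      (forall S T, S \in C -> T \in C ->
          is_face (cone_of S) (fun x => cone_of S x /\ cone_of T x))].

Definition complete_fan (C : {set {set I}}) : Prop :=
  is_fan C /\ forall x : 'rV[R]_n, exists2 S, S \in C & cone_of S x.

Definition primitive_collection (C : {set {set I}}) (P : {set I}) : Prop :=
  (forall S, S \in C -> ~ (P \subset S)) /\
  (forall Q : {set I}, Q \proper P -> exists2 S, S \in C & Q \subset S).

(* smooth cone: generators are part of a Z-basis of Z^n *)
Definition smooth_cone (S : {set I}) : Prop :=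
  exists (B : 'M[int]_n) (f : I -> 'I_n),
    [/\ B \in unitmx, {in S &, injective f} & forall i, i \in S -> row (f i) B = u i].

Definition simplicial_cone (S : {set I}) : Prop :=
  forall a : I -> R, \sum_(i in S) a i *: toR (u i) = 0 -> forall i, i \in S -> a i = 0.

Definition smooth_fan (C : {set {set I}}) : Prop :=
  forall S, S \in C -> smooth_cone S.

Definition simplicial_fan (C : {set {set I}}) : Prop :=
  forall S, S \in C -> simplicial_cone S.

Definition maximal_cone (C : {set {set I}}) (S : {set I}) : Prop :=
  S \in C /\ forall T : {set I}, T \in C -> ~ (S \proper T).

End Fans.

Definition amply_equivalent (R : realType) (n : nat)
  (I1 I2 : finType) (u1 : I1 -> 'rV[int]_n) (C1 : {set {set I1}})
  (u2 : I2 -> 'rV[int]_n) (C2 : {set {set I2}}) (Psi : I1 -> I2) : Prop :=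
  [/\ complete_fan R u1 C1, complete_fan R u2 C2, bijective Psi,
      (forall P : {set I1},
          (primitive_collection C1 P <-> primitive_collection C2 (Psi @: P))) &
      (forall a : I1 -> int,
          (\sum_i a i *: u1 i = 0 <-> \sum_i a i *: u2 (Psi i) = 0))].

Definition intmx_rat (n : nat) (A : 'M[int]_n) : 'M[rat]_n :=
  map_mx (fun z : int => z%:~R) A.

(* The real-linear map x |-> x *m A (A integer) maps the cones of the first fan
   bijectively onto the cones of the second: this is exactly a lattice
   isomorphism inducing a toric isomorphism X_Sigma1 ~= X_Sigma2. *)
Definition induces_toric_iso (R : realType) (n : nat)
  (I1 I2 : finType) (u1 : I1 -> 'rV[int]_n) (C1 : {set {set I1}})
  (u2 : I2 -> 'rV[int]_n) (C2 : {set {set I2}}) (A : 'M[int]_n) : Prop :=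
  let AR : 'M[R]_n := map_mx (fun z : int => z%:~R) A in
  [/\ A \in unitmx,
      (forall S, S \in C1 -> exists2 T, T \in C2 &
          forall y, cone_of u2 T y <-> exists2 x, cone_of u1 S x & y = x *m AR) &
      (forall T, T \in C2 -> exists2 S, S \in C1 &
          forall y, cone_of u2 T y <-> exists2 x, cone_of u1 S x & y = x *m AR)].

(* Since Sigma_1 is smooth and complete, every lattice point lies in a smooth cone and is
   therefore an integral combination of the generators u_rho; as Phi sends each u_rho to the
   lattice vector u_Psi(rho), Phi is an integer matrix A with nonzero determinant.  Ample
   equivalence, through primitive collections, puts the Psi-preimage of every cone of Sigma_2
   inside a cone of Sigma_1 and the Psi-image of every cone of Sigma_1 inside a cone of Sigma_2.
   By the first inclusion the generators of a cone of Sigma_2 are the A-images of part of a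
   lattice basis, so Sigma_2 is simplicial, and smooth when A is unimodular.  A maximal cone of
   the complete simplicial fan Sigma_2 is full-dimensional, so if it is smooth its unimodular
   generator matrix factors as (integer matrix) * A, forcing A to be unimodular.  Finally, for
   unimodular A both inclusions are between smooth cones, any set of whose rays spans a face,
   which is again a cone of the fan; hence A matches the cones of the two fans. *)

From HB Require Import structures.
From mathcomp Require Import all_boot all_order all_algebra.
From mathcomp Require Import reals.
From Stdlib Require Import Classical.
From mathcomp Require Import lra.
Import Order.TTheory GRing.Theory Num.Theory.
Local Open Scope ring_scope.

Set Implicit Arguments. Unset Strict Implicit. Unset Printing Implicit Defensive.

Section IntegerMatrices.
Variables (F : numFieldType) (n : nat).

Lemma map_intmx_inj (p : nat) :
  injective (map_mx (fun z : int => z%:~R : F) : 'M[int]_(p, n) -> 'M[F]_(p, n)).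
Proof.
move=> x y /matrixP xy; apply/matrixP => i j.
by move: (xy i j); rewrite !mxE => /intr_inj.
Qed.

Lemma map_intmx_unit (A : 'M[int]_n) :
  (map_mx (fun z : int => z%:~R : F) A \in unitmx) = (\det A != 0).
Proof. by rewrite unitmxE det_map_mx unitfE intr_eq0. Qed.

Lemma map_intmx_sum (p : nat) (J : Type) (r : seq J) (P : pred J) (z : J -> int)
    (v : J -> 'M[int]_(p, n)) :
  map_mx (fun z : int => z%:~R : F) (\sum_(j <- r | P j) z j *: v j)
  = \sum_(j <- r | P j) (z j)%:~R *: map_mx (fun z : int => z%:~R : F) (v j).
Proof.
rewrite (big_morph _ (@map_mxD _ _ _ p n) (map_mx0 _ _ _)).
by apply: eq_bigr => j _; rewrite map_mxZ.
Qed.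

End IntegerMatrices.

Lemma mulmx_int_inj (n : nat) (A : 'M[int]_n) :
  \det A != 0 -> injective (fun x : 'rV[int]_n => x *m A).
Proof.
move=> detA x y /= /(congr1 (mulmx^~ (\adj A))).
rewrite -!mulmxA mul_mx_adj !mul_mx_scalar => /eqP.
by rewrite -subr_eq0 -scalerBr scalemx_eq0 (negbTE detA) subr_eq0 => /eqP.
Qed.

Section RealPoints.
Variables (R : realType) (n : nat).

Local Notation mxR A := (map_mx (fun z : int => z%:~R : R) A).

Lemma toR_mulmx (x : 'rV[int]_n) (A : 'M[int]_n) : toR R (x *m A) = toR R x *m mxR A.
Proof. exact: map_mxM. Qed.

Lemma toR_row (k : 'I_n) (A : 'M[int]_n) : toR R (row k A) = row k (mxR A).
Proof. exact: map_row. Qed.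

Lemma mxR_mulV (A : 'M[int]_n) : A \in unitmx -> mxR A *m mxR (invmx A) = 1%:M.
Proof. by move=> unitA; rewrite -map_mxM mulmxV // map_mx1. Qed.

Lemma dotR_mx (m x : 'rV[R]_n) : dotR m x = (x *m m^T) 0 0.
Proof. by rewrite /dotR !mxE; apply: eq_bigr => j _; rewrite !mxE mulrC. Qed.

Lemma dotR_sum (I : finType) (S : {set I}) (a : I -> R) (v : I -> 'rV[R]_n) m :
  dotR m (\sum_(i in S) a i *: v i) = \sum_(i in S) a i * dotR m (v i).
Proof.
rewrite dotR_mx mulmx_suml summxE; apply: eq_bigr => i _.
by rewrite -scalemxAl mxE dotR_mx.
Qed.

Lemma ge0_of_frequently (a b : R) :
  (forall N, exists2 m, (N <= m)%N & 0 <= a + (m.+1%:R)^-1 * b) -> 0 <= a.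
Proof.
move=> freq; rewrite leNgt; apply/negP => a_lt0.
have [m bound_le_m] := freq (Num.bound (`|b| / - a)).
have big_m : `|b| < m.+1%:R * - a.
  rewrite -ltr_pdivrMr ?oppr_gt0 //; apply: lt_le_trans (archi_boundP _) _.
    by rewrite divr_ge0 // oppr_ge0 ltW.
  by rewrite ler_nat (leq_trans bound_le_m).
have m_gt0 : (0 : R) < m.+1%:R by rewrite ltr0n.
move/(mulr_ge0 (ltW m_gt0)); rewrite mulrDr mulrA mulfV ?gt_eqF // mul1r.
have := ler_norm b; nra.
Qed.

End RealPoints.

Section Cones.
Variables (R : realType) (n : nat) (I : finType) (u : I -> 'rV[int]_n).

Local Notation mxR A := (map_mx (fun z : int => z%:~R : R) A).
Local Notation w i := (toR R (u i)).
Local Notation cone S := (@cone_of R n I u S).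

Lemma cone_of_nneg_sum (S : {set I}) (a : I -> R) x : (forall i, i \in S -> 0 <= a i) ->
  x = \sum_(i in S) a i *: w i -> cone S x.
Proof.
move=> a_ge0 ->; exists (fun i => if i \in S then a i else 0); split.
  by move=> i; case: ifP => // /a_ge0.
by apply: eq_bigr => i ->.
Qed.

Lemma cone_of_gen (S : {set I}) t : t \in S -> cone S (w t).
Proof.
move=> tS; apply: (cone_of_nneg_sum (a := fun i => (i == t)%:R)); first by move=> i _.
by rewrite (bigD1 t) //= eqxx scale1r big1 ?addr0 // => i /andP [_ /negbTE ->]; rewrite scale0r.
Qed.

Lemma sum_restrict (V : zmodType) (S P : {set I}) (v : I -> V) : P \subset S ->
  \sum_(i in S) (if i \in P then v i else 0) = \sum_(i in P) v i.
Proof.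
move=> /subsetP PS; rewrite -big_mkcondr; apply: eq_bigl => i.
by case iP: (i \in P); rewrite ?andbT ?andbF ?PS.
Qed.

Section SmoothCone.
Variables (S : {set I}) (B : 'M[int]_n) (f : I -> 'I_n).
Hypotheses (unitB : B \in unitmx) (f_inj : {in S &, injective f})
  (rowB : forall i, i \in S -> row (f i) B = u i).

Definition basis_coords (a : I -> R) : 'rV[R]_n := \sum_(i in S) a i *: delta_mx 0 (f i).

Lemma sum_gens_basis_coords (a : I -> R) :
  \sum_(i in S) a i *: w i = basis_coords a *m mxR B.
Proof.
rewrite mulmx_suml; apply: eq_bigr => i iS.
by rewrite -scalemxAl -rowE -toR_row rowB.
Qed.

Lemma basis_coordsE (a : I -> R) j : j \in S -> basis_coords a 0 (f j) = a j.
Proof.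
move=> jS; rewrite summxE (bigD1 j) //= big1 ?addr0 => [|i /andP [iS ij]].
  by rewrite !mxE !eqxx mulr1.
rewrite !mxE eqxx /=; case: eqP => [fji|]; last by rewrite mulr0.
by rewrite (f_inj jS iS fji) eqxx in ij.
Qed.

Lemma basis_coordsE0 (a : I -> R) k : (forall i, i \in S -> f i != k) ->
  basis_coords a 0 k = 0.
Proof.
move=> f_neq; rewrite summxE big1 // => i iS; rewrite !mxE eqxx /=.
by rewrite eq_sym (negbTE (f_neq i iS)) mulr0.
Qed.

Lemma basis_coords_unique (a : I -> R) (x : 'rV[R]_n) :
  \sum_(i in S) a i *: w i = x -> basis_coords a = x *m mxR (invmx B).
Proof. by rewrite sum_gens_basis_coords => <-; rewrite -mulmxA mxR_mulV // mulmx1. Qed.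

End SmoothCone.

Lemma smooth_cone_simplicial (S : {set I}) : smooth_cone u S -> simplicial_cone R u S.
Proof.
case=> B [f [unitB f_inj rowB]] a sum0 i iS.
have := basis_coords_unique unitB rowB sum0; rewrite mul0mx => /matrixP/(_ 0 (f i)).
by rewrite basis_coordsE // mxE.
Qed.

Lemma smooth_cone_subset (S P : {set I}) : P \subset S -> smooth_cone u S -> smooth_cone u P.
Proof.
move=> /subsetP PS [B [f [unitB f_inj rowB]]]; exists B, f; split => //.
  by move=> x y /PS xS /PS yS; apply: f_inj.
by move=> i /PS; apply: rowB.
Qed.

Lemma smooth_cone_lattice_point (S : {set I}) (x : 'rV[int]_n) :
  smooth_cone u S -> cone S (toR R x) -> exists z : I -> int, x = \sum_(i in S) z i *: u i.
Proof.
move=> [B [f [unitB f_inj rowB]]] [a [_ xE]].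
have coordsE := basis_coords_unique unitB rowB (esym xE).
exists (fun i => (x *m invmx B) 0 (f i)); apply: (@map_intmx_inj R).
rewrite map_intmx_sum (sum_gens_basis_coords rowB) -[map_mx _ x]/(toR R x) xE.
rewrite (sum_gens_basis_coords rowB); congr (_ *m _); apply: eq_bigr => i iS.
by rewrite -(basis_coordsE f_inj a iS) coordsE -toR_mulmx mxE.
Qed.

(* the linear form cutting out the face is the sum of the dual basis vectors of the rays
   outside P *)
Lemma smooth_cone_face (S P : {set I}) : smooth_cone u S -> P \subset S ->
  is_face (cone S) (cone P).
Proof.
move=> [B [f [unitB f_inj rowB]]] PS.
pose e : 'rV[R]_n := \row_k ([exists i in S :\: P, f i == k])%:R.
pose m : 'rV[R]_n := (mxR (invmx B) *m e^T)^T.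
have m_gen i : i \in S -> dotR m (w i) = (i \notin P)%:R.
  move=> iS; rewrite dotR_mx trmxK -(rowB i iS) toR_row rowE -mulmxA.
  rewrite (mulmxA (mxR B)) mxR_mulV // mul1mx -rowE !mxE; congr (nat_of_bool _)%:R.
  apply/idP/idP => [/exists_inP [j /setDP [jS jP] /eqP fji] | iP].
    by rewrite -(f_inj _ _ jS iS fji).
  by apply/exists_inP; exists i; rewrite ?inE ?iP ?iS.
have m_gen_ge0 i : i \in S -> 0 <= dotR m (w i) by move=> iS; rewrite m_gen ?ler0n.
exists m; split => [x [a [a_ge0 ->]] | x].
  by rewrite dotR_sum; apply: sumr_ge0 => i iS; rewrite mulr_ge0 ?m_gen_ge0.
split => [[a [a_ge0 xE]] | [[a [a_ge0 xE]] dot0]].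
  split.
    apply: (cone_of_nneg_sum (a := fun i => if i \in P then a i else 0)).
      by move=> i _; case: ifP.
    rewrite xE -(sum_restrict _ PS); apply: eq_bigr => i _.
    by case: ifP; rewrite ?scale0r.
  by rewrite xE dotR_sum big1 // => i iP; rewrite m_gen ?(subsetP PS) // iP mulr0.
rewrite xE dotR_sum in dot0.
have := psumr_eq0P (fun i iS => mulr_ge0 (a_ge0 i) (m_gen_ge0 i iS)) dot0.
move=> a_out0; apply: (cone_of_nneg_sum (a := a)) => [i _|]; first exact: a_ge0.
rewrite xE -(sum_restrict _ PS); apply: eq_bigr => i iS.
case: ifPn => // iP.
by move: (a_out0 i iS); rewrite m_gen // iP mulr1 => ->; rewrite scale0r.
Qed.

End Cones.

Arguments cone_of_gen {R n I u S t}.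

Lemma frequently_in_finite_cover (T : finType) (P : T -> nat -> Prop) :
  (forall m, exists t, P t m) -> exists t, forall N, exists2 m, (N <= m)%N & P t m.
Proof.
move=> cover; apply: NNPP => never.
have bounded t : exists N, forall m, (N <= m)%N -> ~ P t m.
  apply: NNPP => unbounded; apply: never; exists t => N.
  apply: NNPP => none; apply: unbounded; exists N => m Nm Ptm.
  by apply: none; exists m.
have [N N_bounds] := fin_all_exists bounded.
have [t Pt] := cover (\max_t N t)%N.
exact: N_bounds t _ (leq_bigmax t) Pt.
Qed.

Section FanGeometry.
Variables (R : realType) (n : nat) (I : finType) (u : I -> 'rV[int]_n).

Local Notation mxR A := (map_mx (fun z : int => z%:~R : R) A).
Local Notation w i := (toR R (u i)).
Local Notation cone S := (@cone_of R n I u S).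

Lemma simplicial_coef_unique (S : {set I}) (a b : I -> R) : simplicial_cone R u S ->
  \sum_(i in S) a i *: w i = \sum_(i in S) b i *: w i -> {in S, a =1 b}.
Proof.
move=> simpS ab i iS; apply/eqP; rewrite -subr_eq0; apply/eqP.
apply: (simpS (fun i => a i - b i)) => //.
by under eq_bigr do rewrite scalerBl; rewrite sumrB ab subrr.
Qed.

Lemma line_in_span_of_two_points (S : {set I}) (x v : 'rV[R]_n) (s t : R) (c d : I -> R) :
  s != t ->
  x + s *: v = \sum_(i in S) c i *: w i -> x + t *: v = \sum_(i in S) d i *: w i ->
  exists a b : I -> R, x = \sum_(i in S) a i *: w i /\ v = \sum_(i in S) b i *: w i.
Proof.
move=> st xsv xtv; pose b i := (c i - d i) / (s - t).
have vE : v = \sum_(i in S) b i *: w i.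
  have -> : v = (s - t)^-1 *: ((x + s *: v) - (x + t *: v)).
    by rewrite opprD addrACA subrr add0r -scalerBl scalerA mulVf ?scale1r ?subr_eq0.
  rewrite xsv xtv -sumrB scaler_sumr; apply: eq_bigr => i _.
  by rewrite -scalerBl scalerA mulrC.
exists (fun i => c i - s * b i), b; split => //.
rewrite -[x](addrK (s *: v)) xsv vE scaler_sumr -sumrB.
by apply: eq_bigr => i _; rewrite scalerBl scalerA.
Qed.

Lemma cone_of_frequently (S : {set I}) (x v : 'rV[R]_n) : simplicial_cone R u S ->
  (forall N, exists2 m, (N <= m)%N & cone S (x + (m.+1%:R)^-1 *: v)) ->
  cone S x /\ exists b : I -> R, v = \sum_(i in S) b i *: w i.
Proof.
move=> simpS freq.
have [m1 _ [c [_ cE]]] := freq 0%N.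
have [m2 m12 [d [_ dE]]] := freq m1.+1.
have [|a [b [xE vE]]] := line_in_span_of_two_points _ cE dE.
  by rewrite (inj_eq invr_inj) eqr_nat eqSS neq_ltn m12.
split; last by exists b.
apply: (cone_of_nneg_sum (a := a)) => // i iS.
apply: (@ge0_of_frequently _ _ (b i)) => N.
have [m Nm [e [e_ge0 eE]]] := freq N.
have coefE : {in S, e =1 (fun j => a j + (m.+1%:R)^-1 * b j)}.
  apply: (simplicial_coef_unique simpS).
  rewrite -eE xE vE scaler_sumr -big_split; apply: eq_bigr => j _.
  by rewrite scalerA scalerDl.
by exists m => //; rewrite -coefE.
Qed.

Section Fan.
Variable C : {set {set I}}.
Hypothesis fanC : is_fan R u C.

Lemma gen_in_cone (S : {set I}) t : S \in C -> cone S (w t) -> t \in S.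
Proof.
case: fanC => _ [rayC _ raysC _ faceC] SC tS; apply/(raysC S SC t).
have [m [m_ge0 mE]] := faceC S [set t] SC (rayC t).
exists m; split => // x; split => [xt | /mE []//].
apply/mE; split => //; case: xt => [a [a_ge0 ->]]; rewrite big_set1.
case: tS => [b [b_ge0 ->]]; exists (fun j => a t * b j); split.
  by move=> j; apply: mulr_ge0.
by rewrite scaler_sumr; apply: eq_bigr => j _; rewrite scalerA.
Qed.

(* a cone S of the fan meets T in a face of T, and a face containing a relative interior
   point of T is all of T *)
Lemma sub_cone_of_relint (S T : {set I}) (a : I -> R) : S \in C -> T \in C ->
  (forall i, i \in T -> 0 < a i) -> cone S (\sum_(i in T) a i *: w i) -> T \subset S.
Proof.
case: fanC => _ [_ _ _ _ faceC] SC TC a_gt0 relS.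
have [m [m_ge0 mE]] := faceC T S TC SC.
have relT : cone T (\sum_(i in T) a i *: w i).
  by apply: (cone_of_nneg_sum (a := a)) => // i iT; apply/ltW/a_gt0.
have [_] := (mE _).1 (conj relT relS); rewrite dotR_sum => /psumr_eq0P gens_dot0.
apply/subsetP => t tT; apply: gen_in_cone SC _.
suff dot_t : dotR m (w t) = 0 by have [] := (mE _).2 (conj (cone_of_gen tT) dot_t).
have /eqP := gens_dot0 (fun i iT => mulr_ge0 (ltW (a_gt0 i iT)) (m_ge0 _ (cone_of_gen iT))) t tT.
by rewrite mulf_eq0 gt_eqF ?a_gt0 // => /eqP.
Qed.

Section CompleteSimplicialFan.
Hypotheses (coverC : forall x, exists2 S, S \in C & cone S x)
  (simpC : simplicial_fan R u C).

(* the points x + v/(m+1) accumulate in one cone S, which then contains the relative interior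
   point x of T and the direction v; hence T = S by maximality *)
Lemma maximal_cone_span (T : {set I}) : maximal_cone C T ->
  forall v : 'rV[R]_n, exists a : I -> R, v = \sum_(i in T) a i *: w i.
Proof.
move=> [TC T_max] v; pose x := \sum_(i in T) 1 *: w i.
have [S freqS] : exists S, forall N,
    exists2 m, (N <= m)%N & S \in C /\ cone S (x + (m.+1%:R)^-1 *: v).
  apply: frequently_in_finite_cover => m.
  by have [S SC xS] := coverC (x + (m.+1%:R)^-1 *: v); exists S.
have [_ _ [SC _]] := freqS 0%N.
have [xS [b vE]] : cone S x /\ exists b : I -> R, v = \sum_(i in S) b i *: w i.
  by apply: cone_of_frequently (simpC SC) _ => N; have [m Nm [_ Sm]] := freqS N; exists m.
have TS : T \subset S by apply: sub_cone_of_relint SC TC _ xS => i _; exact: ltr01.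
have ST : S \subset T by apply: contra_notT (T_max S SC) => /negPf nST; rewrite properE TS nST.
have -> : T = S by apply/eqP; rewrite eqEsubset TS ST.
by exists b.
Qed.

Lemma smooth_maximal_cone_onto (T : {set I}) (B : 'M[int]_n) (f : I -> 'I_n) :
  maximal_cone C T -> B \in unitmx -> {in T &, injective f} ->
  (forall i, i \in T -> row (f i) B = u i) -> forall k, exists t, t \in T /\ f t = k.
Proof.
move=> T_max unitB f_inj rowB k.
case: (boolP [exists t in T, f t == k]) => [/exists_inP [t tT /eqP ftk] | /exists_inPn not_hit].
  by exists t.
have [a aE] := maximal_cone_span T_max (row k (mxR B)).
have := basis_coords_unique unitB rowB (esym aE).
rewrite -row_mul mxR_mulV // row1 => /matrixP/(_ 0 k).
rewrite basis_coordsE0 => [|i iT]; first by rewrite mxE !eqxx /= => /eqP; rewrite eq_sym oner_eq0.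
exact: not_hit.
Qed.

End CompleteSimplicialFan.

End Fan.

End FanGeometry.

Lemma imset_can (I J : finType) (f : I -> J) (g : J -> I) (A : {set I}) :
  cancel f g -> g @: (f @: A) = A.
Proof. by move=> fK; rewrite -imset_comp (eq_imset _ fK) imset_id. Qed.

Lemma primitive_collection_sub (I : finType) (C : {set {set I}}) (P : {set I}) :
  (forall S, S \in C -> ~ P \subset S) ->
  exists2 Q : {set I}, Q \subset P & primitive_collection C Q.
Proof.
elim: {P}_.+1 {-2}P (ltnSn #|P|) => // k IH P; rewrite ltnS => Pk P_out.
case: (boolP [exists Q : {set I}, (Q \proper P) && [forall S in C, ~~ (Q \subset S)]]).
  move=> /existsP [Q /andP [QP /forall_inP Q_out]].
  have [|Q' Q'Q primQ'] := IH Q (leq_trans (proper_card QP) Pk).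
    by move=> S /Q_out /negP.
  by exists Q' => //; apply: subset_trans Q'Q (proper_sub QP).
move=> /existsPn P_min; exists P => //; split => // Q QP.
by move: (P_min Q); rewrite QP => /forall_inPn [S SC /negbNE QS]; exists S.
Qed.

Lemma in_cone_of_imset_in_cone (I J : finType) (C : {set {set I}}) (D : {set {set J}})
  (h : I -> J) : (forall P, primitive_collection C P -> primitive_collection D (h @: P)) ->
  forall (P : {set I}) (T : {set J}), T \in D -> h @: P \subset T ->
  exists2 S, S \in C & P \subset S.
Proof.
move=> h_prim P T TD PT.
case: (boolP [exists S in C, P \subset S]) => [/exists_inP [S SC PS] | /exists_inPn P_out].
  by exists S.
have [|Q QP /h_prim [Q_out _]] := primitive_collection_sub (C := C) (P := P).
  by move=> S /P_out /negP.
by case: (Q_out T TD); apply: subset_trans PT; apply: imsetS.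
Qed.

Section Transfer.
Variables (R : realType) (n : nat) (I1 I2 : finType).
Variables (u1 : I1 -> 'rV[int]_n) (C1 : {set {set I1}}).
Variables (u2 : I2 -> 'rV[int]_n) (C2 : {set {set I2}}).
Variables (Psi : I1 -> I2) (Psi' : I2 -> I1) (A : 'M[int]_n).
Hypotheses (PsiK : cancel Psi Psi') (Psi'K : cancel Psi' Psi).
Hypothesis prim12 : forall P : {set I1},
  primitive_collection C1 P <-> primitive_collection C2 (Psi @: P).
Hypothesis smooth1 : smooth_fan u1 C1.
Hypotheses (genA : forall i, u1 i *m A = u2 (Psi i)) (detA : \det A != 0).

Local Notation mxR A := (map_mx (fun z : int => z%:~R : R) A).

Lemma cone_preimage_sub (T : {set I2}) : T \in C2 -> exists2 S, S \in C1 & Psi' @: T \subset S.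
Proof.
move=> TC; apply: (in_cone_of_imset_in_cone (fun P => (prim12 P).1) TC).
by rewrite imset_can.
Qed.

Lemma cone_image_sub (S : {set I1}) : S \in C1 -> exists2 T, T \in C2 & Psi @: S \subset T.
Proof.
move=> SC; apply: (in_cone_of_imset_in_cone (h := Psi') _ SC); last by rewrite imset_can.
by move=> Q primQ; apply/prim12; rewrite imset_can.
Qed.

Lemma sum_imset_gens (P : {set I1}) (a : I2 -> R) :
  \sum_(t in Psi @: P) a t *: toR R (u2 t) = (\sum_(i in P) a (Psi i) *: toR R (u1 i)) *m mxR A.
Proof.
rewrite (big_imset _ (in2W (can_inj PsiK))) mulmx_suml /=; apply: eq_bigr => i _.
by rewrite -scalemxAl -toR_mulmx genA.
Qed.

Lemma cone_imset (P : {set I1}) y :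
  cone_of u2 (Psi @: P) y <-> exists2 x, cone_of u1 P x & y = x *m mxR A.
Proof.
split => [[a [a_ge0 ->]] | [x [a [a_ge0 ->]] ->]].
  rewrite sum_imset_gens; exists (\sum_(i in P) a (Psi i) *: toR R (u1 i)) => //.
  by apply: (cone_of_nneg_sum (a := a \o Psi)) => // i _; apply: a_ge0.
apply: (cone_of_nneg_sum (a := a \o Psi')) => [t _|]; first exact: a_ge0.
by rewrite sum_imset_gens; congr (_ *m _); apply: eq_bigr => i _; rewrite /= PsiK.
Qed.

Lemma simplicial_fan_transfer : simplicial_fan R u2 C2.
Proof.
move=> T TC a sum0 t tT.
have [S SC PS] := cone_preimage_sub TC.
have simpP := smooth_cone_simplicial (R := R) (smooth_cone_subset PS (smooth1 SC)).
rewrite -(imset_can T Psi'K) sum_imset_gens in sum0.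
have unitA : mxR A \in unitmx by rewrite map_intmx_unit.
have := simpP (a \o Psi) (can_inj (mulmxK unitA) (etrans sum0 (esym (mul0mx _ _)))).
by move=> /(_ (Psi' t) (imset_f _ tT)); rewrite /= Psi'K.
Qed.

Lemma smooth_fan_transfer : A \in unitmx -> smooth_fan u2 C2.
Proof.
move=> unitA T TC; have [S SC PS] := cone_preimage_sub TC.
have [B [f [unitB f_inj rowB]]] := smooth1 SC.
have Psi'T t : t \in T -> Psi' t \in S by move=> tT; apply: (subsetP PS); apply: imset_f.
exists (B *m A), (f \o Psi'); split; first by rewrite unitmx_mul unitB.
  by move=> t1 t2 /Psi'T t1S /Psi'T t2S /(f_inj _ _ t1S t2S); apply: can_inj.
by move=> t tT; rewrite row_mul rowB ?Psi'T //= genA Psi'K.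
Qed.

Hypotheses (compl1 : complete_fan R u1 C1) (compl2 : complete_fan R u2 C2).

Lemma unitmx_of_smooth_maximal_cone (T : {set I2}) :
  maximal_cone C2 T -> smooth_cone u2 T -> A \in unitmx.
Proof.
move=> T_max [B [f [unitB f_inj rowB]]]; have [fan2 cover2] := compl2.
have [tk tkP] := fin_all_exists (smooth_maximal_cone_onto fan2 cover2
  simplicial_fan_transfer T_max unitB f_inj rowB).
have BE : B = (\matrix_k u1 (Psi' (tk k))) *m A.
  apply/row_matrixP => k; rewrite row_mul rowK genA Psi'K.
  by have [tkT tk_k] := tkP k; rewrite -{1}tk_k rowB.
by move: unitB; rewrite BE unitmx_mul => /andP [].
Qed.

(* both directions use that any subset of the rays of a smooth cone spans a face, and faces of
   cones are cones of the fan *)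
Lemma toric_iso_transfer : A \in unitmx -> induces_toric_iso R u1 C1 u2 C2 A.
Proof.
move=> unitA; have smooth2 := smooth_fan_transfer unitA.
have [[_ [_ _ _ faces1 _]] _] := compl1; have [[_ [_ _ _ faces2 _]] _] := compl2.
split => // [S SC | T TC].
  have [T TC ST] := cone_image_sub SC.
  have [T' T'C T'E] := faces2 T TC _ (smooth_cone_face R (smooth2 T TC) ST).
  by exists T' => // y; apply: iff_trans (T'E y) (cone_imset _ _).
have [S SC TS] := cone_preimage_sub TC.
have [S' S'C S'E] := faces1 S SC _ (smooth_cone_face R (smooth1 SC) TS).
exists S' => // y; rewrite -(imset_can T Psi'K); apply: iff_trans (cone_imset _ _) _.
by split => [[x /S'E xS ->] | [x /S'E xS ->]]; exists x.
Qed.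

End Transfer.

Lemma smooth_complete_fan_lattice_span (R : realType) (n : nat) (I : finType)
    (u : I -> 'rV[int]_n) (C : {set {set I}}) :
  complete_fan R u C -> smooth_fan u C ->
  forall x : 'rV[int]_n, exists z : I -> int, x = \sum_i z i *: u i.
Proof.
move=> [_ coverC] smoothC x; have [S SC xS] := coverC (toR R x).
have [z ->] := smooth_cone_lattice_point (smoothC S SC) xS.
exists (fun i => if i \in S then z i else 0); rewrite big_mkcond /=.
by apply: eq_bigr => i _; case: ifP; rewrite ?scale0r.
Qed.

Lemma intmx_rat_of_lattice_span (n : nat) (I : finType) (v w : I -> 'rV[int]_n)
    (Phi : 'M[rat]_n) :
  (forall x : 'rV[int]_n, exists z : I -> int, x = \sum_i z i *: v i) ->
  (forall i, map_mx (fun z : int => z%:~R) (v i) *m Phi = map_mx (fun z : int => z%:~R) (w i)) ->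
  exists A : 'M[int]_n, intmx_rat A = Phi.
Proof.
move=> span_v vPhi.
have row_int k : exists r : 'rV[int]_n, row k Phi = map_mx (fun z : int => z%:~R) r.
  have [z zE] := span_v (delta_mx 0 k); exists (\sum_i z i *: w i).
  have -> : row k Phi = map_mx (fun z : int => z%:~R) (delta_mx 0 k) *m Phi.
    by rewrite map_delta_mx rowE.
  rewrite zE !map_intmx_sum mulmx_suml; apply: eq_bigr => i _.
  by rewrite -scalemxAl vPhi.
have [r rE] := fin_all_exists row_int.
by exists (\matrix_k r k); apply/row_matrixP => k; rewrite /intmx_rat -map_row rowK rE.
Qed.

Lemma maximal_cone_exists (I : finType) (C : {set {set I}}) (S : {set I}) :
  S \in C -> exists T, maximal_cone C T.
Proof.
move=> SC; have [T TC T_max] := arg_maxnP (fun T : {set I} => #|T|) SC.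
exists T; split => // T' T'C /proper_card; rewrite ltnNge.
by move/negP; apply; apply: T_max.
Qed.

Theorem corollary5p26 (R : realType) (n : nat) (I1 I2 : finType)
  (u1 : I1 -> 'rV[int]_n) (C1 : {set {set I1}})
  (u2 : I2 -> 'rV[int]_n) (C2 : {set {set I2}})
  (Psi : I1 -> I2) (Phi : 'M[rat]_n) :
  amply_equivalent R u1 C1 u2 C2 Psi ->
  smooth_fan u1 C1 ->
  Phi \in unitmx ->
  (forall i, map_mx (fun z : int => z%:~R) (u1 i) *m Phi
             = map_mx (fun z : int => z%:~R) (u2 (Psi i))) ->
  [/\ exists A : 'M[int]_n, intmx_rat A = Phi /\ injective (fun x : 'rV[int]_n => x *m A),
      simplicial_fan R u2 C2,
      ((exists S, maximal_cone C2 S /\ smooth_cone u2 S) <->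
         (exists A : 'M[int]_n, A \in unitmx /\ intmx_rat A = Phi)),
      ((exists A : 'M[int]_n, A \in unitmx /\ intmx_rat A = Phi) <->
         smooth_fan u2 C2) &
      (forall A : 'M[int]_n, A \in unitmx -> intmx_rat A = Phi ->
         induces_toric_iso R u1 C1 u2 C2 A)].
Proof.
move=> [compl1 compl2 [Psi' PsiK Psi'K] prim12 _] smooth1 unitPhi genPhi.
have [A AE] := intmx_rat_of_lattice_span (smooth_complete_fan_lattice_span compl1 smooth1) genPhi.
have AE' A' : intmx_rat A' = Phi -> A' = A by rewrite -AE => /map_intmx_inj.
have genA i : u1 i *m A = u2 (Psi i).
  by apply: (@map_intmx_inj rat); rewrite map_mxM -genPhi -AE.
have detA : \det A != 0 by rewrite -(map_intmx_unit rat) -/(intmx_rat A) AE.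
have unit_smooth : A \in unitmx -> smooth_fan u2 C2.
  exact: smooth_fan_transfer Psi'K prim12 smooth1 genA.
have smooth_max_unit : (exists S, maximal_cone C2 S /\ smooth_cone u2 S) -> A \in unitmx.
  case=> T [T_max smoothT].
  exact: (unitmx_of_smooth_maximal_cone PsiK Psi'K prim12 smooth1 genA detA compl2 T_max smoothT).
have smooth_max : smooth_fan u2 C2 -> exists S, maximal_cone C2 S /\ smooth_cone u2 S.
  move=> smooth2; have [S SC _] := compl2.2 0; have [T [TC T_max]] := maximal_cone_exists SC.
  by exists T; split; last exact: smooth2.
split.
- by exists A; split; last exact: mulmx_int_inj.
- exact: simplicial_fan_transfer PsiK Psi'K prim12 smooth1 genA detA.
- split => [/smooth_max_unit unitA | [A' [unitA' /AE' A'E]]]; first by exists A.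
  by apply/smooth_max/unit_smooth; rewrite -A'E.
- split => [[A' [unitA' /AE' A'E]] | /smooth_max /smooth_max_unit unitA]; last by exists A.
  by apply: unit_smooth; rewrite -A'E.
- move=> A' unitA' /AE' A'E; rewrite A'E in unitA' *.
  exact: (toric_iso_transfer PsiK Psi'K prim12 smooth1 genA compl1 compl2 unitA').
Qed.
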